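(* Let $\gamma(z)=\sum_{n=1}^{\infty} z^{n-1}\left(\frac{1}{n}-\log\frac{n+1}{n}\right)$ for $z$ in the closed unit disk $D=\{z\in\mathbb{C}:|z|\le 1\}$. Then $\gamma$ is continuous on $D$ and holomorphic on the interior of $D$. However, the left-hand derivative of $\gamma$ at $z=1$ does not exist; more precisely, $$\lim_{t\to 1^-}\frac{\gamma(1)-\gamma(t)}{1-t}=+\infty.$$ In particular, the Taylor series expansion of $\gamma(z)$ at $z=0$ has radius of convergence $1$. *)

From Stdlib Require Import Reals.
From Coquelicot Require Import Coquelicot.
Open Scope R_scope.

(* Coefficients, 0-indexed: gamma_coef n = 1/(n+1) - ln((n+2)/(n+1)),
   so that gamma(z) = sum_{n>=0} gamma_coef n * z^n
   = sum_{n>=1} z^(n-1) (1/n - log((n+1)/n)). *)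
Definition gamma_coef (n : nat) : R :=
  / INR (S n) - ln (INR (S (S n)) / INR (S n)).

Definition gamma_term (z : C) (n : nat) : C :=
  mult (RtoC (gamma_coef n)) (@pow_n C_Ring z n).

(* The sum of the series (real and imaginary parts summed separately,
   via Coquelicot's total [Series]); on D the series converges and this is its sum. *)
Definition gamma (z : C) : C :=
  (Series (fun n => Re (gamma_term z n)), Series (fun n => Im (gamma_term z n))).

Definition unit_disk (z : C) : Prop := Cmod z <= 1.

From Stdlib Require Import Reals Lra Lia.
From Coquelicot Require Import Coquelicot.
Open Scope R_scope.

(* The Taylor bounds [x - x^2/2 <= ln (1 + x) <= x - x^2/(2(1+x))] give
   [1/(2(n+1)(n+2)) <= gamma_coef n <= 1/(2(n+1)^2)].  Hence the coefficients are
   absolutely summable, which makes the series converge uniformly on the closed disk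
   (continuity) and, being bounded, complex differentiable inside it; the ratio of
   consecutive coefficients tends to 1, so the radius is 1.  On the other hand
   [n gamma_coef n >= 1/(12 n)], so [sum n gamma_coef n] diverges like [ln N], and since
   [(gamma 1 - gamma t)/(1 - t) = sum gamma_coef n (1 - t^n)/(1 - t)
      >= t^N sum_(n <= N) n gamma_coef n],
   the left difference quotient at 1 tends to +oo. *)

Lemma nondecreasing_of_derive_nonneg (f df : R -> R) (a x : R) : a <= x ->
  (forall y, a <= y -> is_derive f y (df y)) ->
  (forall y, a <= y -> 0 <= df y) -> f a <= f x.
Proof.
  intros Hax Hder Hpos.
  destruct (MVT_gen f a x df) as [c [Hc Hmvt]].
  - intros y Hy. apply Hder. unfold Rmin in Hy; destruct Rle_dec; lra.
  - intros y Hy. apply continuity_pt_filterlim, (@ex_derive_continuous R_AbsRing R_NormedModule).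
    eexists. apply Hder. unfold Rmin in Hy; destruct Rle_dec; lra.
  - unfold Rmin, Rmax in Hc; destruct Rle_dec; try lra.
    assert (0 <= df c * (x - a)) by (apply Rmult_le_pos; [apply Hpos|]; lra).
    lra.
Qed.

Lemma ln_1p_ge x : 0 <= x -> x - x ^ 2 / 2 <= ln (1 + x).
Proof.
  intros Hx.
  assert (H := nondecreasing_of_derive_nonneg
    (fun y => ln (1 + y) - y + y ^ 2 / 2) (fun y => y ^ 2 / (1 + y)) 0 x Hx).
  cbv beta in H. rewrite Rplus_0_r, ln_1 in H.
  cut (0 - 0 + 0 ^ 2 / 2 <= ln (1 + x) - x + x ^ 2 / 2); [lra|].
  apply H.
  - intros y Hy. auto_derive; [lra|]. field. lra.
  - intros y Hy. apply Rmult_le_pos; [nra|]. apply Rlt_le, Rinv_0_lt_compat. lra.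
Qed.

Lemma ln_1p_le x : 0 <= x -> ln (1 + x) <= x - x ^ 2 / (2 * (1 + x)).
Proof.
  intros Hx.
  assert (H := nondecreasing_of_derive_nonneg
    (fun y => y - y ^ 2 / (2 * (1 + y)) - ln (1 + y)) (fun y => y ^ 2 / (2 * (1 + y) ^ 2)) 0 x Hx).
  cbv beta in H. rewrite Rplus_0_r, ln_1 in H.
  cut (0 - 0 ^ 2 / (2 * 1) - 0 <= x - x ^ 2 / (2 * (1 + x)) - ln (1 + x)); [lra|].
  apply H.
  - intros y Hy. auto_derive; [lra|]. field. lra.
  - intros y Hy. apply Rmult_le_pos; [nra|]. apply Rlt_le, Rinv_0_lt_compat. nra.
Qed.

Lemma pow_le_1 x n : 0 <= x <= 1 -> x ^ n <= 1.
Proof. intros H. rewrite <- (pow1 n). apply pow_incr. exact H. Qed.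

Lemma pow_le_pow_of_le t m n : 0 <= t <= 1 -> (m <= n)%nat -> t ^ n <= t ^ m.
Proof.
  intros Ht Hmn. replace n with (m + (n - m))%nat by lia. rewrite pow_add.
  assert (0 <= t ^ m) by (apply pow_le; lra).
  assert (t ^ (n - m) <= 1) by (apply pow_le_1, Ht).
  assert (0 <= t ^ (n - m)) by (apply pow_le; lra). nra.
Qed.

Lemma pow_ge_1_sub_mul x n : 0 <= x <= 1 -> 1 - INR n * x <= (1 - x) ^ n.
Proof.
  intros Hx. induction n.
  - simpl. lra.
  - rewrite S_INR. simpl pow. pose proof (pos_INR n).
    assert (0 <= (1 - x) ^ n) by (apply pow_le; lra). nra.
Qed.

Lemma mul_pow_mul_1_sub_le t n : 0 <= t <= 1 -> INR n * t ^ n * (1 - t) <= 1 - t ^ n.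
Proof.
  intros Ht. induction n.
  - simpl. lra.
  - rewrite S_INR. simpl pow.
    assert (0 <= t ^ n) by (apply pow_le; lra).
    assert (t ^ n <= 1) by (apply pow_le_1, Ht).
    pose proof (pos_INR n).
    assert (INR n * (t * t ^ n) * (1 - t) <= INR n * t ^ n * (1 - t)).
    { apply Rmult_le_compat_r; [lra|]. apply Rmult_le_compat_l; [lra|nra]. }
    assert (0 <= t ^ n * ((1 - t) * (1 - t))) by (apply Rmult_le_pos; nra). nra.
Qed.

Lemma is_lim_seq_INR_succ : is_lim_seq (fun n => INR n + 1) p_infty.
Proof.
  apply is_lim_seq_ext with (fun n => INR (S n)); [intros n; apply S_INR|].
  apply (is_lim_seq_incr_1 INR p_infty), is_lim_seq_INR.
Qed.

Lemma is_lim_seq_inv_succ : is_lim_seq (fun n => / (INR n + 1)) 0.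
Proof. apply (is_lim_seq_inv _ _ is_lim_seq_INR_succ). discriminate. Qed.

Lemma is_series_telescoping (u : nat -> R) (l : R) :
  is_lim_seq u l -> is_series (fun n => u n - u (S n)) (u O - l).
Proof.
  intros Hu.
  assert (Hsum : forall N, sum_n (fun n => u n - u (S n)) N = u O - u (S N)).
  { induction N; [rewrite sum_O; reflexivity|].
    rewrite sum_Sn, IHN. unfold plus; simpl. ring. }
  apply (filterlim_ext (fun N => u O - u (S N))); [intros N; symmetry; apply Hsum|].
  apply (is_lim_seq_minus' (fun _ => u O) (fun N => u (S N))).
  - apply is_lim_seq_const.
  - apply (is_lim_seq_incr_1 u l), Hu.
Qed.

Lemma sum_n_le_Series (a : nat -> R) N : (forall n, 0 <= a n) -> ex_series a ->
  sum_n a N <= Series a.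
Proof.
  intros Ha Hs. apply (is_lim_seq_incr_compare (sum_n a)).
  - apply Series_correct, Hs.
  - intros n. rewrite sum_Sn. unfold plus; simpl. specialize (Ha (S n)). lra.
Qed.

Lemma norm_le_Series {K : AbsRing} {V : NormedModule K} (u : nat -> V) (l : V) (b : nat -> R) :
  (forall n, norm (u n) <= b n) -> is_series u l -> ex_series b -> norm l <= Series b.
Proof.
  intros Hb Hu Hs.
  apply (is_lim_seq_le (fun N => norm (sum_n u N)) (sum_n b) (norm l) (Series b)).
  - intros N. eapply Rle_trans; [apply norm_sum_n_m|]. apply sum_n_m_le, Hb.
  - apply (filterlim_comp _ _ _ (sum_n u) norm eventually (locally l) _ Hu), filterlim_norm.
  - apply Series_correct, Hs.
Qed.

Lemma ex_series_bounded (a : nat -> R) : ex_series a -> exists M, forall n, Rabs (a n) <= M.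
Proof.
  intros Ha. destruct (filterlim_bounded a) as [M HM].
  - exists 0. apply (ex_series_lim_0 _ Ha).
  - exists M. exact HM.
Qed.

Lemma ex_series_tail_lt (b : nat -> R) (eps : R) : ex_series b -> 0 < eps ->
  exists N, Series (fun k => b (S N + k)%nat) < eps.
Proof.
  intros Hs He.
  assert (Htail : is_lim_seq (fun N => Series b - sum_n b N) 0).
  { replace (Finite 0) with (Rbar_minus (Series b) (Series b)) by (simpl; f_equal; ring).
    apply is_lim_seq_minus'; [apply is_lim_seq_const|apply Series_correct, Hs]. }
  destruct (proj1 (filterlim_locally _ _) Htail (mkposreal _ He)) as [N HN].
  exists N. specialize (HN N (le_n _)).
  rewrite (Series_incr_n b (S N)), <- sum_n_Reals in HN by (auto; lia).
  unfold ball in HN; simpl in HN. unfold AbsRing_ball, abs, minus, plus, opp in HN; simpl in HN.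
  apply Rabs_def2 in HN. change (Series (fun k => b (S (N + k))) < eps). lra.
Qed.

Lemma ex_series_sqr_succ_mul_pow (r : R) : 0 <= r < 1 ->
  ex_series (fun n => (INR n + 1) ^ 2 * r ^ n).
Proof.
  intros Hr.
  (* [c n = (n + 1) (n + 2)]: the geometric series differentiated twice *)
  set (c := PS_derive (PS_derive (fun _ => 1))).
  assert (Hc : CV_radius c = 1).
  { unfold c. rewrite !CV_radius_derive, (CV_radius_finite_DAlembert _ 1), Rinv_1.
    - reflexivity.
    - intros _; apply R1_neq_R0.
    - lra.
    - apply (is_lim_seq_ext (fun _ => 1)); [|apply is_lim_seq_const].
      intros n. rewrite Rdiv_1_r, Rabs_R1. reflexivity. }
  assert (Hin := CV_disk_inside c r).
  rewrite Hc, Rabs_pos_eq in Hin by lra.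
  apply (@ex_series_le R_AbsRing R_CompleteNormedModule _ (fun n => Rabs (c n * r ^ n)));
    [|apply Hin; simpl; lra].
  intros n. change (Rabs ((INR n + 1) ^ 2 * r ^ n) <= Rabs (c n * r ^ n)).
  unfold c, PS_derive. rewrite !S_INR. pose proof (pos_INR n).
  assert (0 <= r ^ n) by (apply pow_le; lra).
  rewrite !Rabs_pos_eq by nra. apply Rmult_le_compat_r; nra.
Qed.

Lemma sum_n_C (u : nat -> C) N :
  @sum_n C_AbelianMonoid u N = (sum_n (fun n => Re (u n)) N, sum_n (fun n => Im (u n)) N).
Proof.
  induction N.
  - rewrite !sum_O. destruct (u O); reflexivity.
  - rewrite !sum_Sn, IHN. reflexivity.
Qed.

Lemma is_series_C_of_components (u : nat -> C) (x y : R) :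
  is_series (fun n => Re (u n)) x -> is_series (fun n => Im (u n)) y ->
  @is_series C_AbsRing C_NormedModule u (x, y).
Proof.
  intros Hx Hy. unfold is_series in *. apply filterlim_locally. intros eps.
  generalize (filter_and _ _ (proj1 (filterlim_locally _ _) Hx eps)
                             (proj1 (filterlim_locally _ _) Hy eps)).
  apply filter_imp. intros N [HN1 HN2].
  rewrite sum_n_C. split; assumption.
Qed.

Lemma is_series_C_dominated (u : nat -> C) (b : nat -> R) :
  (forall n, Cmod (u n) <= b n) -> ex_series b ->
  @is_series C_AbsRing C_NormedModule u
    (Series (fun n => Re (u n)), Series (fun n => Im (u n))).
Proof.
  intros Hb Hs.
  assert (Hcomp : forall p : C -> R, (forall x, Rabs (p x) <= Cmod x) ->
                  ex_series (fun n => p (u n))).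
  { intros p Hp. apply (@ex_series_le R_AbsRing R_CompleteNormedModule _ b); [|exact Hs].
    intros n. eapply Rle_trans; [apply Hp|apply Hb]. }
  apply is_series_C_of_components; apply Series_correct, Hcomp; intros x.
  - apply re_le_Cmod.
  - eapply Rle_trans; [apply Rmax_r|apply Rmax_Cmod].
Qed.

Lemma continuous_within_of_Cmod (f : C -> C) (D : C -> Prop) (z : C) :
  (forall eps : posreal, exists delta : posreal, forall w,
     D w -> Cmod (w - z) < delta -> Cmod (f w - f z) < eps) ->
  filterlim f (within D (locally z)) (locally (f z)).
Proof.
  intros Hf. apply filterlim_locally. intros eps.
  destruct (Hf eps) as [delta Hdelta].
  assert (Hd : 0 < delta / sqrt 2) by (apply Rdiv_lt_0_compat; [apply cond_pos|apply Rlt_sqrt2_0]).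
  exists (mkposreal _ Hd). intros w Hw HDw.
  apply C_NormedModule_mixin_compat1, Hdelta; auto.
  apply C_NormedModule_mixin_compat2 in Hw. simpl in Hw.
  replace (sqrt 2 * (delta / sqrt 2)) with (pos delta) in Hw
    by (field; apply Rgt_not_eq, Rlt_sqrt2_0).
  exact Hw.
Qed.

Lemma is_derive_C_of_Cmod (f : C -> C) (z l : C) :
  (forall eps : posreal, exists delta : posreal, forall w,
     Cmod (w - z) < delta -> Cmod (f w - f z - (w - z) * l) <= eps * Cmod (w - z)) ->
  @is_derive C_AbsRing C_NormedModule f z l.
Proof.
  intros Hf. split; [apply is_linear_scal_l|].
  intros x Hx.
  apply (@is_filter_lim_locally_unique C_AbsRing (AbsRing_NormedModule C_AbsRing)) in Hx. subst x.
  intros eps. destruct (Hf eps) as [delta Hdelta].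
  exists delta. intros w Hw. apply Hdelta, Hw.
Qed.

Lemma Cmod_pow_sub_le_2 (w z : C) n : Cmod w <= 1 -> Cmod z <= 1 -> Cmod (w ^ n - z ^ n) <= 2.
Proof.
  intros Hw Hz. eapply Rle_trans; [apply Cmod_triangle|]. rewrite Cmod_opp, !Cmod_pow.
  pose proof (Cmod_ge_0 w). pose proof (Cmod_ge_0 z).
  assert (Cmod w ^ n <= 1) by (apply pow_le_1; lra).
  assert (Cmod z ^ n <= 1) by (apply pow_le_1; lra). lra.
Qed.

Lemma Cmod_pow_sub_le (w z : C) n : Cmod w <= 1 -> Cmod z <= 1 ->
  Cmod (w ^ n - z ^ n) <= INR n * Cmod (w - z).
Proof.
  intros Hw Hz. induction n.
  - replace (w ^ 0 - z ^ 0)%C with (RtoC 0) by (apply injective_projections; simpl; ring).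
    rewrite Cmod_0. simpl. lra.
  - rewrite !Cpow_S, S_INR.
    replace (w * w ^ n - z * z ^ n)%C with (w * (w ^ n - z ^ n) + (w - z) * z ^ n)%C by ring.
    eapply Rle_trans; [apply Cmod_triangle|]. rewrite !Cmod_mult, Cmod_pow.
    pose proof (Cmod_ge_0 (w ^ n - z ^ n)). pose proof (Cmod_ge_0 (w - z)).
    pose proof (Cmod_ge_0 w). pose proof (Cmod_ge_0 z).
    assert (Cmod z ^ n <= 1) by (apply pow_le_1; lra).
    assert (0 <= Cmod z ^ n) by (apply pow_le; lra).
    nra.
Qed.

(* The remainder [E n := w^n - z^n - n (w - z) z^(n-1)] satisfies
   [E (n+2) = w E (n+1) + (n+1) (w - z)^2 z^n]. *)
Lemma Cmod_pow_sub_linear_le (w z : C) (r : R) n : Cmod w <= r -> Cmod z <= r ->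
  r * Cmod (w ^ S n - z ^ S n - INR (S n) * (w - z) * z ^ n)
  <= INR (S n) ^ 2 * Cmod (w - z) ^ 2 * r ^ n.
Proof.
  intros Hw Hz.
  assert (Hr : 0 <= r) by (pose proof (Cmod_ge_0 z); lra).
  set (h := Cmod (w - z)). assert (Hh : 0 <= h) by apply Cmod_ge_0.
  induction n.
  - replace (w ^ 1 - z ^ 1 - INR 1 * (w - z) * z ^ 0)%C with (RtoC 0)
      by (apply injective_projections; simpl; ring).
    rewrite Cmod_0, Rmult_0_r. apply Rmult_le_pos; [nra|apply pow_le, Hr].
  - replace (w ^ S (S n) - z ^ S (S n) - INR (S (S n)) * (w - z) * z ^ S n)%C
      with (w * (w ^ S n - z ^ S n - INR (S n) * (w - z) * z ^ n)
            + INR (S n) * ((w - z) * (w - z)) * z ^ n)%C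
      by (rewrite !Cpow_S, (S_INR (S n)), RtoC_plus; ring).
    set (E := Cmod (w ^ S n - z ^ S n - INR (S n) * (w - z) * z ^ n)) in *.
    assert (HE : 0 <= E) by apply Cmod_ge_0.
    assert (Hzn : Cmod z ^ n <= r ^ n) by (apply pow_incr; split; [apply Cmod_ge_0|exact Hz]).
    assert (Hrn : 0 <= r ^ n) by (apply pow_le, Hr).
    pose proof (pos_INR (S n)) as Hn.
    assert (Hstep : Cmod (w * (w ^ S n - z ^ S n - INR (S n) * (w - z) * z ^ n)
                          + INR (S n) * ((w - z) * (w - z)) * z ^ n)
                    <= r * E + INR (S n) * h ^ 2 * r ^ n).
    { eapply Rle_trans; [apply Cmod_triangle|].
      rewrite !Cmod_mult, Cmod_R, Cmod_pow, Rabs_pos_eq by exact Hn. fold E h.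
      apply Rplus_le_compat; [apply Rmult_le_compat_r; assumption|].
      rewrite <- Rsqr_pow2. apply Rmult_le_compat_l; [|exact Hzn].
      apply Rmult_le_pos; [exact Hn|apply Rle_0_sqr]. }
    rewrite (S_INR (S n)). set (m := INR (S n)) in *.
    apply Rle_trans with (r * (r * E + m * h ^ 2 * r ^ n));
      [apply Rmult_le_compat_l; assumption|].
    assert (HrE : r * (r * E) <= r * (m ^ 2 * h ^ 2 * r ^ n))
      by (apply Rmult_le_compat_l; assumption).
    assert (HP : 0 <= h * h * r * r ^ n) by (repeat apply Rmult_le_pos; assumption).
    simpl pow in *. nra.
Qed.

Section PowerSeriesOnClosedDisk.

Variable a : nat -> R.
Variable f : C -> C.
Hypothesis a_abs_summable : ex_series (fun n => Rabs (a n)).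
Hypothesis f_is_sum : forall z, Cmod z <= 1 ->
  @is_series C_AbsRing C_NormedModule (fun n => (a n * z ^ n)%C) (f z).

Lemma is_series_pseries_sub w z : Cmod w <= 1 -> Cmod z <= 1 ->
  @is_series C_AbsRing C_NormedModule (fun n => (a n * (w ^ n - z ^ n))%C) (f w - f z)%C.
Proof.
  intros Hw Hz.
  apply (is_series_ext (fun n => plus (a n * w ^ n)%C (opp (a n * z ^ n)%C))).
  - intros n. change (a n * w ^ n - a n * z ^ n = a n * (w ^ n - z ^ n))%C. ring.
  - apply (@is_series_minus C_AbsRing C_NormedModule); auto.
Qed.

Lemma Cmod_pseries_sub_le w z : Cmod w <= 1 -> Cmod z <= 1 ->
  ex_series (fun n => Rabs (a n) * Cmod (w ^ n - z ^ n)) /\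
  Cmod (f w - f z) <= Series (fun n => Rabs (a n) * Cmod (w ^ n - z ^ n)).
Proof.
  intros Hw Hz.
  assert (Hsum : ex_series (fun n => Rabs (a n) * Cmod (w ^ n - z ^ n))).
  { apply (@ex_series_le R_AbsRing R_CompleteNormedModule _ (fun n => 2 * Rabs (a n))).
    - intros n. change (Rabs (Rabs (a n) * Cmod (w ^ n - z ^ n)) <= 2 * Rabs (a n)).
      rewrite Rabs_pos_eq by (apply Rmult_le_pos; [apply Rabs_pos|apply Cmod_ge_0]).
      rewrite Rmult_comm. apply Rmult_le_compat_r; [apply Rabs_pos|].
      apply Cmod_pow_sub_le_2; assumption.
    - exact (@ex_series_scal_l R_AbsRing R_NormedModule 2 _ a_abs_summable). }
  split; [exact Hsum|].
  refine (@norm_le_Series C_AbsRing C_NormedModule _ _ _ _ (is_series_pseries_sub w z Hw Hz) Hsum).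
  intros n. change (Cmod (a n * (w ^ n - z ^ n)) <= Rabs (a n) * Cmod (w ^ n - z ^ n)).
  rewrite Cmod_mult, Cmod_R. apply Rle_refl.
Qed.

Lemma Cmod_pseries_sub_split_le w z N : Cmod w <= 1 -> Cmod z <= 1 ->
  Cmod (f w - f z) <= sum_n (fun n => INR n * Rabs (a n)) N * Cmod (w - z)
                      + 2 * Series (fun k => Rabs (a (S N + k)%nat)).
Proof.
  intros Hw Hz. destruct (Cmod_pseries_sub_le w z Hw Hz) as [Hsum Hle].
  set (c := fun n => Rabs (a n) * Cmod (w ^ n - z ^ n)) in *.
  rewrite (Series_incr_n c (S N)), <- sum_n_Reals in Hle by (auto; lia). simpl pred in Hle.
  assert (Hhead : sum_n c N <= sum_n (fun n => INR n * Rabs (a n)) N * Cmod (w - z)).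
  { replace (sum_n (fun n => INR n * Rabs (a n)) N * Cmod (w - z))
      with (sum_n (fun n => INR n * Rabs (a n) * Cmod (w - z)) N)
      by apply (sum_n_mult_r (K := R_Ring)).
    apply sum_n_m_le. intros n. unfold c.
    rewrite (Rmult_comm (INR n)), Rmult_assoc. apply Rmult_le_compat_l; [apply Rabs_pos|].
    apply Cmod_pow_sub_le; assumption. }
  assert (Htail : Series (fun k => c (S N + k)%nat) <= 2 * Series (fun k => Rabs (a (S N + k)%nat))).
  { rewrite <- Series_scal_l. apply Series_le.
    - intros k. unfold c. split; [apply Rmult_le_pos; [apply Rabs_pos|apply Cmod_ge_0]|].
      rewrite Rmult_comm. apply Rmult_le_compat_r; [apply Rabs_pos|].
      apply Cmod_pow_sub_le_2; assumption.
    - apply (@ex_series_scal_l R_AbsRing R_NormedModule 2 (fun k => Rabs (a (S N + k)%nat))).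
      apply (ex_series_incr_n (fun n => Rabs (a n))), a_abs_summable. }
  lra.
Qed.

Lemma pseries_continuous_on_closed_disk z : Cmod z <= 1 ->
  filterlim f (within unit_disk (locally z)) (locally (f z)).
Proof.
  intros Hz. apply continuous_within_of_Cmod. intros eps.
  destruct (ex_series_tail_lt _ (eps / 4) a_abs_summable) as [N HN];
    [pose proof (cond_pos eps); lra|].
  set (P := sum_n (fun n => INR n * Rabs (a n)) N + 1).
  assert (HP : 0 < P).
  { assert (0 <= sum_n (fun n => INR n * Rabs (a n)) N); [|unfold P; lra].
    rewrite sum_n_Reals. apply cond_pos_sum. intros n.
    apply Rmult_le_pos; [apply pos_INR|apply Rabs_pos]. }
  assert (Hdelta : 0 < eps / (2 * P)) by (apply Rdiv_lt_0_compat; [apply cond_pos|lra]).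
  exists (mkposreal _ Hdelta). intros w Hw Hwz. simpl in Hwz.
  pose proof (Cmod_pseries_sub_split_le w z N Hw Hz) as Hle.
  assert (P * Cmod (w - z) < eps / 2).
  { apply Rmult_lt_reg_l with (/ P); [apply Rinv_0_lt_compat, HP|].
    rewrite <- Rmult_assoc, Rinv_l, Rmult_1_l by lra.
    replace (/ P * (eps / 2)) with (eps / (2 * P)) by (field; lra). exact Hwz. }
  pose proof (Cmod_ge_0 (w - z)). unfold P in *. nra.
Qed.

Lemma ex_series_pseries_derivative z : Cmod z < 1 ->
  exists l, @is_series C_AbsRing C_NormedModule (fun n => (INR (S n) * a (S n) * z ^ n)%C) l.
Proof.
  intros Hz. pose proof (Cmod_ge_0 z).
  destruct (ex_series_bounded a (ex_series_Rabs _ a_abs_summable)) as [M Ha].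
  apply (@ex_series_le C_AbsRing C_CompleteNormedModule _
           (fun n => M * ((INR n + 1) ^ 2 * Cmod z ^ n))).
  - intros n. change (Cmod (INR (S n) * a (S n) * z ^ n) <= M * ((INR n + 1) ^ 2 * Cmod z ^ n)).
    rewrite !Cmod_mult, !Cmod_R, Cmod_pow, S_INR, Rabs_pos_eq by (pose proof (pos_INR n); lra).
    pose proof (pos_INR n). pose proof (Ha (S n)). pose proof (Rabs_pos (a (S n))).
    assert (0 <= Cmod z ^ n) by (apply pow_le; lra).
    assert (0 <= Cmod z ^ n * (INR n + 1) * (M * INR n + (M - Rabs (a (S n)))))
      by (apply Rmult_le_pos; [apply Rmult_le_pos|]; nra).
    nra.
  - apply (@ex_series_scal_l R_AbsRing R_NormedModule M), ex_series_sqr_succ_mul_pow. lra.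
Qed.

Lemma is_series_pseries_remainder w z l : Cmod w <= 1 -> Cmod z <= 1 ->
  @is_series C_AbsRing C_NormedModule (fun n => (INR (S n) * a (S n) * z ^ n)%C) l ->
  @is_series C_AbsRing C_NormedModule
    (fun n => (a (S n) * (w ^ S n - z ^ S n - INR (S n) * (w - z) * z ^ n))%C)
    (f w - f z - (w - z) * l)%C.
Proof.
  intros Hw Hz Hl.
  apply (is_series_ext (fun n => @plus C_NormedModule (a (S n) * (w ^ S n - z ^ S n))%C
           (opp (@scal C_AbsRing C_NormedModule (w - z)%C (INR (S n) * a (S n) * z ^ n)%C)))).
  { intros n. change (a (S n) * (w ^ S n - z ^ S n) - (w - z) * (INR (S n) * a (S n) * z ^ n)
      = a (S n) * (w ^ S n - z ^ S n - INR (S n) * (w - z) * z ^ n))%C. ring. }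
  apply (@is_series_minus C_AbsRing C_NormedModule);
    [|apply (@is_series_scal C_AbsRing C_NormedModule), Hl].
  (* the [n = 0] term of the series of [f w - f z] vanishes *)
  apply (is_series_incr_1 (fun n => (a n * (w ^ n - z ^ n))%C)).
  replace (@plus (NormedModule.AbelianMonoid C_AbsRing C_NormedModule)
             (f w - f z)%C (a O * (w ^ O - z ^ O))%C) with (f w - f z)%C.
  - apply is_series_pseries_sub; assumption.
  - apply injective_projections; simpl; ring.
Qed.

Lemma Cmod_pseries_remainder_le (M r : R) w z l : (forall n, Rabs (a n) <= M) ->
  0 < r < 1 -> Cmod w <= r -> Cmod z <= r ->
  @is_series C_AbsRing C_NormedModule (fun n => (INR (S n) * a (S n) * z ^ n)%C) l ->
  Cmod (f w - f z - (w - z) * l)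
  <= M * Cmod (w - z) ^ 2 / r * Series (fun n => (INR n + 1) ^ 2 * r ^ n).
Proof.
  intros Ha Hr Hw Hz Hl.
  set (g := fun n => (INR n + 1) ^ 2 * r ^ n).
  assert (Hg : ex_series g) by (apply ex_series_sqr_succ_mul_pow; lra).
  rewrite <- Series_scal_l.
  refine (@norm_le_Series C_AbsRing C_NormedModule _ _ _ _
            (is_series_pseries_remainder w z l ltac:(lra) ltac:(lra) Hl) _).
  - intros n. change (Cmod (a (S n) * (w ^ S n - z ^ S n - INR (S n) * (w - z) * z ^ n))
                      <= M * Cmod (w - z) ^ 2 / r * g n).
    rewrite Cmod_mult, Cmod_R.
    pose proof (Cmod_pow_sub_linear_le w z r n Hw Hz) as Hbound.
    apply Rmult_le_reg_l with r; [lra|].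
    replace (r * (M * Cmod (w - z) ^ 2 / r * g n))
      with (M * (INR (S n) ^ 2 * Cmod (w - z) ^ 2 * r ^ n))
      by (unfold g; rewrite S_INR; field; lra).
    apply Rle_trans with (Rabs (a (S n)) * (INR (S n) ^ 2 * Cmod (w - z) ^ 2 * r ^ n)).
    + rewrite <- Rmult_assoc, (Rmult_comm r), Rmult_assoc.
      apply Rmult_le_compat_l; [apply Rabs_pos|exact Hbound].
    + apply Rmult_le_compat_r; [|apply Ha].
      apply Rmult_le_pos; [apply Rmult_le_pos; apply pow2_ge_0|apply pow_le; lra].
  - apply (@ex_series_scal_l R_AbsRing R_NormedModule _ g Hg).
Qed.

Lemma pseries_ex_derive_in_open_disk z : Cmod z < 1 ->
  @ex_derive C_AbsRing C_NormedModule f z.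
Proof.
  intros Hz. pose proof (Cmod_ge_0 z).
  destruct (ex_series_pseries_derivative z Hz) as [l Hl].
  destruct (ex_series_bounded a (ex_series_Rabs _ a_abs_summable)) as [M Ha].
  assert (HM : 0 <= M) by (eapply Rle_trans; [apply Rabs_pos|apply (Ha O)]).
  set (r := (1 + Cmod z) / 2).
  assert (Hr : 0 < r < 1) by (unfold r; lra).
  set (S2 := Series (fun n => (INR n + 1) ^ 2 * r ^ n)).
  assert (HS2 : 0 <= S2).
  { unfold S2. rewrite <- (sum_n_le_Series _ O), sum_O; [simpl; lra| |].
    - intros n. apply Rmult_le_pos; [apply pow2_ge_0|apply pow_le; lra].
    - apply ex_series_sqr_succ_mul_pow. lra. }
  exists l. apply is_derive_C_of_Cmod. intros eps.
  set (delta := Rmin (r - Cmod z) (eps * r / (M * S2 + 1))).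
  assert (Hdelta : 0 < delta).
  { apply Rmin_case; [unfold r; lra|]. apply Rdiv_lt_0_compat; [|nra].
    apply Rmult_lt_0_compat; [apply cond_pos|lra]. }
  exists (mkposreal _ Hdelta). intros w Hw. simpl in Hw.
  pose proof (Rmin_l (r - Cmod z) (eps * r / (M * S2 + 1))) as Hdelta_l.
  pose proof (Rmin_r (r - Cmod z) (eps * r / (M * S2 + 1))) as Hdelta_r.
  fold delta in Hdelta_l, Hdelta_r.
  set (h := Cmod (w - z)) in *. assert (Hh : 0 <= h) by apply Cmod_ge_0.
  assert (Hwr : Cmod w <= r).
  { replace w with (z + (w - z))%C by ring. eapply Rle_trans; [apply Cmod_triangle|]. fold h. lra. }
  eapply Rle_trans; [apply (Cmod_pseries_remainder_le M r w z l Ha Hr Hwr ltac:(lra) Hl)|].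
  fold h S2.
  assert (Hsmall : h * (M * S2 + 1) <= eps * r).
  { assert (Hh1 : h <= eps * r / (M * S2 + 1)) by lra.
    apply Rmult_le_compat_r with (r := M * S2 + 1) in Hh1; [|nra].
    replace (eps * r / (M * S2 + 1) * (M * S2 + 1)) with (eps * r) in Hh1 by (field; nra).
    exact Hh1. }
  apply Rmult_le_reg_r with r; [lra|].
  replace (M * h ^ 2 / r * S2 * r) with (h * (h * (M * S2))) by (field; lra).
  replace (eps * h * r) with (h * (eps * r)) by ring.
  apply Rmult_le_compat_l; [exact Hh|lra].
Qed.

End PowerSeriesOnClosedDisk.

Lemma difference_quotient_ge (a : nat -> R) N t : (forall n, 0 <= a n) -> ex_series a ->
  0 <= t < 1 ->
  t ^ N * sum_n (fun n => INR n * a n) N <= (Series a - Series (fun n => a n * t ^ n)) / (1 - t).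
Proof.
  intros Ha Hs Ht.
  assert (Htn : forall n, 0 <= t ^ n <= 1)
    by (intros n; split; [apply pow_le|apply pow_le_1]; lra).
  assert (Hst : ex_series (fun n => a n * t ^ n)).
  { apply (@ex_series_le R_AbsRing R_CompleteNormedModule _ a); [|exact Hs].
    intros n. change (Rabs (a n * t ^ n) <= a n). specialize (Htn n). specialize (Ha n).
    rewrite Rabs_pos_eq by nra. nra. }
  apply (Rle_div_r _ _ (1 - t)); [lra|].
  rewrite <- Series_minus by assumption.
  eapply Rle_trans; [|apply sum_n_le_Series].
  - rewrite !sum_n_Reals.
    replace (t ^ N * sum_f_R0 (fun n => INR n * a n) N * (1 - t))
      with (sum_f_R0 (fun n => INR n * a n * (t ^ N * (1 - t))) N) by (rewrite <- scal_sum; ring).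
    apply sum_Rle. intros n Hn.
    specialize (Ha n). pose proof (pos_INR n).
    pose proof (pow_le_pow_of_le t n N ltac:(lra) Hn).
    pose proof (mul_pow_mul_1_sub_le t n ltac:(lra)).
    apply Rle_trans with (a n * (INR n * t ^ n * (1 - t))); [|nra].
    replace (INR n * a n * (t ^ N * (1 - t))) with (a n * (INR n * t ^ N * (1 - t))) by ring.
    apply Rmult_le_compat_l; [exact Ha|]. apply Rmult_le_compat_r; [lra|].
    apply Rmult_le_compat_l; lra.
  - intros n. specialize (Htn n). specialize (Ha n). nra.
  - exists (Series a - Series (fun n => a n * t ^ n)).
    exact (@is_series_minus R_AbsRing R_NormedModule _ _ _ _
             (Series_correct _ Hs) (Series_correct _ Hst)).
Qed.

Lemma difference_quotient_at_left_1 (a : nat -> R) : (forall n, 0 <= a n) -> ex_series a ->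
  is_lim_seq (sum_n (fun n => INR n * a n)) p_infty ->
  filterlim (fun t => (Series a - Series (fun n => a n * t ^ n)) / (1 - t))
            (at_left 1) (Rbar_locally p_infty).
Proof.
  intros Ha Hs Hdiv P [M HM].
  destruct (proj2 (is_lim_seq_spec _ _) Hdiv (2 * Rmax M 0)) as [N HN].
  specialize (HN N (le_n N)).
  pose proof (pos_INR N).
  assert (Hdelta : 0 < / (2 * (INR N + 1))) by (apply Rinv_0_lt_compat; lra).
  exists (mkposreal _ Hdelta). intros t Ht Ht1. apply HM.
  change (Rabs (t - 1) < / (2 * (INR N + 1))) in Ht. apply Rabs_def2 in Ht.
  assert (Hdl : / (2 * (INR N + 1)) <= / 2) by (apply Rinv_le_contravar; lra).
  assert (HtN : / 2 <= t ^ N).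
  { replace t with (1 - (1 - t)) by ring. eapply Rle_trans; [|apply pow_ge_1_sub_mul; lra].
    assert (INR N * (1 - t) <= INR N / (2 * (INR N + 1))) by (apply Rmult_le_compat_l; lra).
    assert (INR N / (2 * (INR N + 1)) <= / 2)
      by (apply (Rle_div_l _ _ (2 * (INR N + 1))); [lra|]; lra).
    lra. }
  eapply Rlt_le_trans; [|apply (difference_quotient_ge a N t Ha Hs); lra].
  pose proof (Rmax_l M 0). pose proof (Rmax_r M 0).
  assert (0 <= (t ^ N - / 2) * sum_n (fun n => INR n * a n) N) by (apply Rmult_le_pos; lra).
  nra.
Qed.

Lemma gamma_coef_eq n : gamma_coef n = / (INR n + 1) - ln (1 + / (INR n + 1)).
Proof.
  unfold gamma_coef. rewrite !S_INR. pose proof (pos_INR n).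
  replace ((INR n + 1 + 1) / (INR n + 1)) with (1 + / (INR n + 1)) by (field; lra).
  reflexivity.
Qed.

Lemma gamma_coef_ge n : / (2 * (INR n + 1) * (INR n + 2)) <= gamma_coef n.
Proof.
  rewrite gamma_coef_eq. pose proof (pos_INR n).
  assert (Hu : 0 <= / (INR n + 1)) by (apply Rlt_le, Rinv_0_lt_compat; lra).
  pose proof (ln_1p_le _ Hu).
  replace (/ (2 * (INR n + 1) * (INR n + 2)))
    with ((/ (INR n + 1)) ^ 2 / (2 * (1 + / (INR n + 1)))) by (field; lra).
  lra.
Qed.

Lemma gamma_coef_le n : gamma_coef n <= / (2 * (INR n + 1) ^ 2).
Proof.
  rewrite gamma_coef_eq. pose proof (pos_INR n).
  assert (Hu : 0 <= / (INR n + 1)) by (apply Rlt_le, Rinv_0_lt_compat; lra).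
  pose proof (ln_1p_ge _ Hu).
  replace (/ (2 * (INR n + 1) ^ 2)) with ((/ (INR n + 1)) ^ 2 / 2) by (field; lra).
  lra.
Qed.

Lemma gamma_coef_pos n : 0 < gamma_coef n.
Proof.
  eapply Rlt_le_trans; [|apply gamma_coef_ge]. pose proof (pos_INR n).
  apply Rinv_0_lt_compat. nra.
Qed.

Lemma ex_series_gamma_coef : ex_series gamma_coef.
Proof.
  apply (@ex_series_le R_AbsRing R_CompleteNormedModule _ (fun n => / (INR n + 1) - / (INR (S n) + 1))).
  - intros n. change (Rabs (gamma_coef n) <= / (INR n + 1) - / (INR (S n) + 1)).
    rewrite Rabs_pos_eq by (apply Rlt_le, gamma_coef_pos).
    eapply Rle_trans; [apply gamma_coef_le|]. rewrite S_INR. pose proof (pos_INR n).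
    replace (/ (INR n + 1) - / (INR n + 1 + 1)) with (/ ((INR n + 1) * (INR n + 2))) by (field; lra).
    apply Rinv_le_contravar; nra.
  - eexists. apply (is_series_telescoping (fun n => / (INR n + 1))), is_lim_seq_inv_succ.
Qed.

Lemma ln_le_sum_n_mul_gamma_coef N : ln (INR N + 1) / 12 <= sum_n (fun n => INR n * gamma_coef n) N.
Proof.
  induction N.
  - rewrite sum_O. simpl. rewrite Rplus_0_l, ln_1. lra.
  - rewrite sum_Sn, S_INR. unfold plus; simpl. pose proof (pos_INR N).
    assert (Hu : 0 <= / (INR N + 1)) by (apply Rlt_le, Rinv_0_lt_compat; lra).
    assert (Hln : ln (INR N + 1 + 1) - ln (INR N + 1) <= / (INR N + 1)).
    { rewrite <- ln_div by lra.
      replace ((INR N + 1 + 1) / (INR N + 1)) with (1 + / (INR N + 1)) by (field; lra).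
      pose proof (ln_1p_le _ Hu).
      assert (0 <= (/ (INR N + 1)) ^ 2 / (2 * (1 + / (INR N + 1)))).
      { apply Rmult_le_pos; [apply pow2_ge_0|apply Rlt_le, Rinv_0_lt_compat; lra]. }
      lra. }
    assert (Hterm : / (INR N + 1) <= 12 * ((INR N + 1) * gamma_coef (S N))).
    { pose proof (gamma_coef_ge (S N)) as Hge. rewrite S_INR in Hge.
      set (x := INR N + 1) in *. assert (Hx : 1 <= x) by (unfold x; lra).
      apply Rle_trans with (12 * (x * / (2 * (x + 1) * (x + 2))));
        [|apply Rmult_le_compat_l; [lra|apply Rmult_le_compat_l; [lra|exact Hge]]].
      replace (/ x) with ((x + 1) * (x + 2) * / (x * (x + 1) * (x + 2))) by (field; lra).
      replace (12 * (x * / (2 * (x + 1) * (x + 2)))) with (6 * x ^ 2 * / (x * (x + 1) * (x + 2)))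
        by (field; lra).
      apply Rmult_le_compat_r; [apply Rlt_le, Rinv_0_lt_compat; nra|nra]. }
    lra.
Qed.

Lemma is_lim_seq_sum_n_mul_gamma_coef :
  is_lim_seq (sum_n (fun n => INR n * gamma_coef n)) p_infty.
Proof.
  apply (is_lim_seq_le_p_loc (fun N => ln (INR N + 1) * / 12)).
  - exists O. intros N _. apply ln_le_sum_n_mul_gamma_coef.
  - rewrite <- (is_Rbar_mult_unique _ _ _ (is_Rbar_mult_p_infty_pos (/ 12) ltac:(simpl; lra))).
    apply is_lim_seq_scal_r, (is_lim_comp_seq ln (fun N => INR N + 1) p_infty p_infty).
    + exact is_lim_ln_p.
    + exists O. intros N _. discriminate.
    + apply is_lim_seq_INR_succ.
Qed.

Lemma gamma_coef_ratio_bounds n :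
  1 - 3 / (INR n + 1) <= Rabs (gamma_coef (S n) / gamma_coef n) <= 1.
Proof.
  pose proof (gamma_coef_pos n) as Hpos. pose proof (gamma_coef_pos (S n)) as HposS.
  pose proof (gamma_coef_le n) as Hle. pose proof (gamma_coef_ge n) as Hge.
  pose proof (gamma_coef_le (S n)) as HleS. pose proof (gamma_coef_ge (S n)) as HgeS.
  rewrite S_INR in HleS, HgeS. pose proof (pos_INR n).
  set (x := INR n + 1) in *. assert (Hx : 1 <= x) by (unfold x; lra).
  replace (INR n + 2) with (x + 1) in Hge by (unfold x; ring).
  replace (x + 2) with (x + 1 + 1) in HgeS by ring.
  rewrite Rabs_pos_eq by (apply Rlt_le, Rdiv_lt_0_compat; assumption).
  split.
  - apply (Rle_div_r _ _ _ Hpos).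
    destruct (Rle_lt_dec 0 (1 - 3 / x)) as [Hq|Hq]; [|nra].
    apply Rle_trans with ((1 - 3 / x) * / (2 * x ^ 2)); [apply Rmult_le_compat_l; assumption|].
    eapply Rle_trans; [|exact HgeS].
    assert (E : / (2 * (x + 1) * (x + 1 + 1)) - (1 - 3 / x) * / (2 * x ^ 2)
                = (7 * x + 6) * / (2 * x ^ 3 * (x + 1) * (x + 2))) by (field; lra).
    assert (0 <= (7 * x + 6) * / (2 * x ^ 3 * (x + 1) * (x + 2))).
    { apply Rmult_le_pos; [lra|]. apply Rlt_le, Rinv_0_lt_compat.
      apply Rmult_lt_0_compat; [apply Rmult_lt_0_compat; [apply Rmult_lt_0_compat|]|]; try lra.
      apply pow_lt; lra. }
    lra.
  - apply (Rle_div_l _ _ _ Hpos). rewrite Rmult_1_l.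
    eapply Rle_trans; [exact HleS|]. eapply Rle_trans; [|exact Hge].
    apply Rinv_le_contravar; nra.
Qed.

Lemma CV_radius_gamma_coef : CV_radius gamma_coef = Finite 1.
Proof.
  rewrite (CV_radius_finite_DAlembert gamma_coef 1), Rinv_1.
  - reflexivity.
  - intros n. apply Rgt_not_eq, gamma_coef_pos.
  - lra.
  - apply (is_lim_seq_le_le (fun n => 1 - 3 / (INR n + 1)) _ (fun _ => 1));
      [apply gamma_coef_ratio_bounds| |apply is_lim_seq_const].
    replace (Finite 1) with (Finite (1 - 3 * 0)) by (f_equal; ring).
    apply (is_lim_seq_minus' (fun _ => 1)); [apply is_lim_seq_const|].
    exact (is_lim_seq_scal_l _ 3 0 is_lim_seq_inv_succ).
Qed.

Lemma gamma_term_eq z n : gamma_term z n = (gamma_coef n * z ^ n)%C.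
Proof.
  assert (Hpow : forall k, @pow_n C_Ring z k = (z ^ k)%C).
  { induction k; [reflexivity|]. simpl. rewrite IHk. reflexivity. }
  unfold gamma_term. rewrite Hpow. reflexivity.
Qed.

Lemma is_series_gamma z : Cmod z <= 1 ->
  @is_series C_AbsRing C_NormedModule (gamma_term z) (gamma z).
Proof.
  intros Hz. apply (is_series_C_dominated _ gamma_coef); [|exact ex_series_gamma_coef].
  intros n. rewrite gamma_term_eq, Cmod_mult, Cmod_R, Cmod_pow.
  rewrite Rabs_pos_eq by (apply Rlt_le, gamma_coef_pos).
  rewrite <- (Rmult_1_r (gamma_coef n)) at 2.
  apply Rmult_le_compat_l; [apply Rlt_le, gamma_coef_pos|].
  apply pow_le_1. split; [apply Cmod_ge_0|exact Hz].
Qed.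

Lemma gamma_RtoC t : gamma (RtoC t) = RtoC (Series (fun n => gamma_coef n * t ^ n)).
Proof.
  assert (Hterm : forall n, gamma_term (RtoC t) n = RtoC (gamma_coef n * t ^ n))
    by (intros n; rewrite gamma_term_eq, RtoC_mult, RtoC_pow; reflexivity).
  apply injective_projections.
  - change (Series (fun n => Re (gamma_term (RtoC t) n)) = Series (fun n => gamma_coef n * t ^ n)).
    apply Series_ext. intros n. rewrite Hterm. reflexivity.
  - change (Series (fun n => Im (gamma_term (RtoC t) n)) = 0).
    rewrite (Series_ext _ (fun _ => 0 * 0)), Series_scal_l; [ring|].
    intros n. rewrite Hterm. simpl. ring.
Qed.

Theorem theorem5 :
  (* the series converges on the closed unit disk, with sum gamma z *)
  (forall z : C, unit_disk z -> @is_series C_AbsRing C_NormedModule (gamma_term z) (gamma z)) /\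
  (* gamma is continuous on the closed unit disk *)
  (forall z : C, unit_disk z -> filterlim gamma (within unit_disk (locally z)) (locally (gamma z))) /\
  (* gamma is holomorphic (complex differentiable) on the open unit disk *)
  (forall z : C, Cmod z < 1 -> @ex_derive C_AbsRing C_NormedModule gamma z) /\
  (* gamma is real on [-1,1], and the left difference quotient at 1 tends to +oo *)
  (forall t : R, -1 <= t <= 1 -> Im (gamma (RtoC t)) = 0) /\
  filterlim (fun t : R => (Re (gamma (RtoC 1)) - Re (gamma (RtoC t))) / (1 - t))
            (at_left 1) (Rbar_locally p_infty) /\
  (* the Taylor series at 0 (coefficients gamma_coef) has radius of convergence 1 *)
  CV_radius gamma_coef = Finite 1.
Proof.
  assert (Habs : ex_series (fun n => Rabs (gamma_coef n))).
  { apply (ex_series_ext gamma_coef); [|exact ex_series_gamma_coef].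
    intros n. symmetry. apply Rabs_pos_eq, Rlt_le, gamma_coef_pos. }
  assert (Hsum : forall z, Cmod z <= 1 ->
            @is_series C_AbsRing C_NormedModule (fun n => (gamma_coef n * z ^ n)%C) (gamma z)).
  { intros z Hz. apply (is_series_ext _ _ _ (gamma_term_eq z)), is_series_gamma, Hz. }
  assert (Hre : forall t, Re (gamma (RtoC t)) = Series (fun n => gamma_coef n * t ^ n))
    by (intros t; rewrite gamma_RtoC; reflexivity).
  split; [exact is_series_gamma|].
  split; [exact (pseries_continuous_on_closed_disk _ _ Habs Hsum)|].
  split; [exact (pseries_ex_derive_in_open_disk _ _ Habs Hsum)|].
  split; [intros t _; rewrite gamma_RtoC; reflexivity|].
  split; [|exact CV_radius_gamma_coef].
  apply (filterlim_ext (fun t => (Series gamma_coef - Series (fun n => gamma_coef n * t ^ n)) / (1 - t))).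
  - intros t. rewrite !Hre. f_equal. f_equal. apply Series_ext. intros n. rewrite pow1. ring.
  - apply difference_quotient_at_left_1.
    + intros n. apply Rlt_le, gamma_coef_pos.
    + exact ex_series_gamma_coef.
    + exact is_lim_seq_sum_n_mul_gamma_coef.
Qed.
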